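(* In the dual access model, there exists an algorithm which, on input a threshold $n\in\mathbb{N}$, $n\ge1$, and a parameter $\varepsilon>0$, and given dual access to a distribution $D$ over an arbitrary (finite) set satisfying $\min_{x\in\mathrm{supp}(D)}D(x)\ge\frac1n$, outputs with probability at least $2/3$ an estimate $\hat k$ with $|\hat k-|\mathrm{supp}(D)||\le\varepsilon n$, and has query complexity $O(1/\varepsilon^2)$.
   Context: $\mathrm{supp}(D)=\{x: D(x)>0\}$. In the dual access model, an algorithm accesses $D$ via a sampling oracle $\mathsf{SAMP}_D$ (returns $x$ with probability $D(x)$, independently of all previous calls) and an evaluation oracle $\mathsf{EVAL}_D$ (on query $x$ returns $D(x)$); each call counts as one query. *)

From HB Require Import structures.
From mathcomp Require Import all_boot all_order all_algebra.
From mathcomp Require Import reals.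
Set Implicit Arguments. Unset Strict Implicit. Unset Printing Implicit Defensive.
Import Order.TTheory GRing.Theory Num.Theory.
Local Open Scope ring_scope.

(* A randomized adaptive algorithm with dual access to a distribution over T,
   returning a value in R, as a (well-founded) decision tree:
   - Ret r      : halt and output r
   - Samp k     : call SAMP_D, receive x : T, continue with k x
   - Eval x k   : call EVAL_D on x, receive D(x) : R, continue with k (D x)
   - Flip k     : internal fair coin toss (free, not a query). *)
Inductive alg (T R : Type) : Type :=
| Ret : R -> alg T R
| Samp : (T -> alg T R) -> alg T R
| Eval : T -> (R -> alg T R) -> alg T R
| Flip : (bool -> alg T R) -> alg T R.

Arguments Ret {T R}.
Arguments Samp {T R}.
Arguments Eval {T R}.
Arguments Flip {T R}.

Definition is_distr (R : realType) (T : finType) (D : T -> R) : Prop :=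
  (forall x, 0 <= D x) /\ \sum_(x : T) D x = 1.

Definition supp (R : realType) (T : finType) (D : T -> R) : {set T} :=
  [set x | 0 < D x].

(* probability that the algorithm run with dual access to D outputs a value
   satisfying P (SAMP calls are independent draws from D) *)
Fixpoint prob_out (R : realType) (T : finType) (D : T -> R) (P : pred R)
    (a : alg T R) : R :=
  match a with
  | Ret r => (P r)%:R
  | Samp k => \sum_(x : T) D x * prob_out D P (k x)
  | Eval x k => prob_out D P (k (D x))
  | Flip k => (prob_out D P (k true) + prob_out D P (k false)) / 2
  end.

Fixpoint queries_le (T R : Type) (a : alg T R) (d : nat) : Prop :=
  match a with
  | Ret _ => True
  | Samp k => match d with 0 => False | d'.+1 => forall x, queries_le (k x) d' end
  | Eval _ k => match d with 0 => False | d'.+1 => forall y, queries_le (k y) d' end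
  | Flip k => forall b, queries_le (k b) d
  end.

(** The estimator averages [1/D(x)] over [m = O(1/eps^2)] samples [x ~ D],
    reading [D(x)] with one EVAL query per sample. Each term has mean
    [sum_(x in supp D) D(x) / D(x) = |supp D|], and since [D(x) >= 1/n] on the
    support its second moment is at most [sum_x D(x) n^2 = n^2]. Chebyshev's
    inequality for the average then gives an error of at most [eps n] with
    probability [1 - 1/(m eps^2) >= 2/3]. When [eps >= 1] no query is needed:
    [|supp D| <= n <= eps n], so the output [0] is already accurate. *)
From HB Require Import structures.
From mathcomp Require Import all_boot all_order all_algebra.
From mathcomp Require Import reals.
From mathcomp Require Import ring lra.
Set Implicit Arguments. Unset Strict Implicit. Unset Printing Implicit Defensive.
Import Order.TTheory GRing.Theory Num.Theory.
Local Open Scope ring_scope.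

Lemma sum_sqr_dev_le (R : realDomainType) (T : finType) (D f : T -> R) :
  \sum_(x : T) D x = 1 ->
  \sum_(x : T) D x * (f x - \sum_(y : T) D y * f y) ^+ 2
    <= \sum_(x : T) D x * f x ^+ 2.
Proof.
move=> D_sum1; set mean := \sum_y D y * f y.
rewrite (eq_bigr (fun x => D x * f x ^+ 2 - 2 * mean * (D x * f x) + mean ^+ 2 * D x));
  last by move=> x _; ring.
rewrite !big_split /= sumrN -!mulr_sumr D_sum1 -/mean.
have := sqr_ge0 mean; lra.
Qed.

Section ExpectedOutput.
Variables (R : realType) (T : finType) (D : T -> R).

Fixpoint expect_out (f : R -> R) (a : alg T R) : R :=
  match a with
  | Ret r => f r
  | Samp k => \sum_(x : T) D x * expect_out f (k x)
  | Eval x k => expect_out f (k (D x))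
  | Flip k => (expect_out f (k true) + expect_out f (k false)) / 2
  end.

Lemma prob_outE (P : pred R) (a : alg T R) :
  prob_out D P a = expect_out (fun r => (P r)%:R) a.
Proof.
elim: a => [r|k IH|x k IH|k IH] //=; last by rewrite !IH.
by apply: eq_bigr => x _; rewrite IH.
Qed.

Hypothesis D_ge0 : forall x, 0 <= D x.

Lemma ler_expect_out (f g : R -> R) (a : alg T R) :
  (forall r, f r <= g r) -> expect_out f a <= expect_out g a.
Proof.
move=> le_fg; elim: a => [r|k IH|x k IH|k IH] //=.
- by apply: ler_sum => x _; exact: ler_wpM2l.
- by rewrite ler_pM2r ?invr_gt0 //; exact: lerD.
Qed.

Hypothesis D_sum1 : \sum_(x : T) D x = 1.

Lemma expect_out_affine (c b : R) (f : R -> R) (a : alg T R) :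
  expect_out (fun r => c + b * f r) a = c + b * expect_out f a.
Proof.
elim: a => [r|k IH|x k IH|k IH] //=; last by rewrite !IH; field.
under eq_bigr => x _ do rewrite IH mulrDr.
by rewrite big_split /= -mulr_suml D_sum1 mul1r mulr_sumr; congr (_ + _);
  apply: eq_bigr => x _; rewrite mulrCA.
Qed.

Lemma chebyshev_out (t delta : R) (a : alg T R) : 0 < delta ->
  1 - expect_out (fun r => (r - t) ^+ 2) a / delta ^+ 2
    <= prob_out D (fun r => `|r - t| <= delta) a.
Proof.
move=> delta_gt0; rewrite prob_outE mulrC -mulNr -expect_out_affine.
apply: ler_expect_out => r.
have dev_ge0 : 0 <= delta ^- 2 * (r - t) ^+ 2 by rewrite mulr_ge0 ?invr_ge0 ?sqr_ge0.
case: (leP `|r - t| delta) => [_|far]; first by rewrite (_ : true%:R = 1 :> R) //; lra.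
rewrite mulNr subr_le0 mulrC ler_pdivlMr ?exprn_gt0 // mul1r.
by rewrite -[X in _ <= X]real_normK ?num_real // ltW // ltrXn2r // ltW.
Qed.

End ExpectedOutput.

Section InverseMassEstimator.
Variables (R : realType) (T : finType).

Fixpoint inv_mass_sum (m : R) (j : nat) (acc : R) : alg T R :=
  match j with
  | 0%N => Ret (acc / m)
  | j'.+1 => Samp (fun x => Eval x (fun y => inv_mass_sum m j' (acc + y^-1)))
  end.

Definition inv_mass_mean (m : nat) : alg T R := inv_mass_sum m%:R m 0.

Lemma queries_inv_mass_sum (m : R) (j : nat) (acc : R) :
  queries_le (inv_mass_sum m j acc) j.*2.
Proof. by elim: j acc => [|j IH] acc //= x y; exact: IH. Qed.

Variable D : T -> R.
Hypothesis D_sum1 : \sum_(x : T) D x = 1.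

Let mu := \sum_(x : T) D x * (D x)^-1.
Let var := \sum_(x : T) D x * ((D x)^-1 - mu) ^+ 2.

Lemma expect_inv_mass_sum (t m : R) (j : nat) (acc : R) : m != 0 ->
  expect_out D (fun r => (r - t) ^+ 2) (inv_mass_sum m j acc)
    = ((acc + j%:R * mu) / m - t) ^+ 2 + j%:R * var / m ^+ 2.
Proof.
move=> m_neq0; elim: j acc => [|j IH] acc /=; first by rewrite mul0r addr0; ring.
set u := (acc + j.+1%:R * mu) / m - t.
under eq_bigr => x _ do rewrite IH.
rewrite (eq_bigr (fun x => u ^+ 2 * D x + (2 * u / m) * (D x * (D x)^-1 - D x * mu)
    + m^-2 * (D x * ((D x)^-1 - mu) ^+ 2) + j%:R * var / m ^+ 2 * D x)); last first.
  by move=> x _; move: (D x)^-1 => y; rewrite /u mulrS; field.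
rewrite !big_split /= -!mulr_sumr sumrB -mulr_suml D_sum1 -/mu -/var.
by rewrite /u mulrS; field.
Qed.

Lemma expect_inv_mass_mean (m : nat) : (0 < m)%N ->
  expect_out D (fun r => (r - mu) ^+ 2) (inv_mass_mean m) = var / m%:R.
Proof.
move=> m_gt0; have m_neq0 : m%:R != 0 :> R by rewrite pnatr_eq0 -lt0n.
by rewrite expect_inv_mass_sum // add0r; field.
Qed.

End InverseMassEstimator.

Section SupportSize.
Variables (R : realType) (T : finType) (D : T -> R) (n : nat).
Hypothesis D_distr : is_distr D.

(* Off the support [D x * (D x)^-1 = 0 * 0^-1 = 0], since [0^-1 = 0]. *)
Lemma sum_mass_inv_mass : \sum_(x : T) D x * (D x)^-1 = #|supp D|%:R.
Proof.
rewrite -sum1_card natr_sum [RHS]big_mkcond /=; apply: eq_bigr => x _.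
rewrite inE lt_def D_distr.1 andbT.
by have [->|Dx_neq0] := eqVneq (D x) 0; rewrite ?mul0r // mulfV.
Qed.

Hypothesis n_gt0 : (0 < n)%N.
Hypothesis mass_ge : forall x, x \in supp D -> n%:R^-1 <= D x.

Lemma inv_mass_le x : (D x)^-1 <= n%:R.
Proof.
have [->|Dx_neq0] := eqVneq (D x) 0; first by rewrite invr0.
have Dx_gt0 : 0 < D x by rewrite lt_def Dx_neq0 D_distr.1.
rewrite -[n%:R]invrK lef_pV2 ?posrE ?invr_gt0 ?ltr0n //.
by apply: mass_ge; rewrite inE.
Qed.

Lemma card_supp_le : #|supp D|%:R <= n%:R :> R.
Proof.
rewrite -sum_mass_inv_mass; apply: (@le_trans _ _ (\sum_x D x * n%:R)).
  by apply: ler_sum => x _; rewrite ler_wpM2l ?D_distr.1 ?inv_mass_le.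
by rewrite -mulr_suml D_distr.2 mul1r.
Qed.

Lemma inv_mass_var_le :
  \sum_(x : T) D x * ((D x)^-1 - #|supp D|%:R) ^+ 2 <= n%:R ^+ 2.
Proof.
rewrite -sum_mass_inv_mass; apply: le_trans (sum_sqr_dev_le _ D_distr.2) _.
apply: (@le_trans _ _ (\sum_x D x * n%:R ^+ 2)).
  apply: ler_sum => x _; rewrite ler_wpM2l ?D_distr.1 // lerXn2r ?nnegrE ?inv_mass_le //.
  by rewrite invr_ge0 D_distr.1.
by rewrite -mulr_suml D_distr.2 mul1r.
Qed.

Lemma inv_mass_mean_accurate (m : nat) (delta : R) : (0 < m)%N -> 0 < delta ->
  1 - n%:R ^+ 2 / (m%:R * delta ^+ 2)
    <= prob_out D (fun r => `|r - #|supp D|%:R| <= delta) (inv_mass_mean R T m).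
Proof.
move=> m_gt0 delta_gt0; apply: le_trans (chebyshev_out D_distr.1 D_distr.2 _ _ delta_gt0).
rewrite -sum_mass_inv_mass expect_inv_mass_mean ?D_distr.2 // sum_mass_inv_mass.
rewrite lerB // -mulrA -invfM ler_wpM2r ?inv_mass_var_le //.
by rewrite invr_ge0 mulr_ge0 ?sqr_ge0.
Qed.

End SupportSize.

Definition sample_size (R : realType) (eps : R) : nat := Num.truncn (4 / eps ^+ 2).

Lemma sample_size_le (R : realType) (eps : R) : 0 < eps ->
  (sample_size eps)%:R <= 4 / eps ^+ 2.
Proof. by move=> eps_gt0; rewrite truncn_le divr_ge0 // ltW ?exprn_gt0. Qed.

Lemma sample_size_ge (R : realType) (eps : R) : 0 < eps -> eps < 1 ->
  3 <= (sample_size eps)%:R * eps ^+ 2.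
Proof.
move=> eps_gt0 eps_lt1; have eps2_gt0 : 0 < eps ^+ 2 by rewrite exprn_gt0.
have inv_eps2_gt1 : 1 < (eps ^+ 2)^-1 by rewrite invf_gt1 // expr_lt1 // ltW.
have := truncnS_gt (4 / eps ^+ 2); rewrite -/(sample_size eps) mulrS.
by rewrite -ler_pdivrMr //; lra.
Qed.

Theorem theorem14 (R : realType) :
  exists (A : nat -> R -> forall T : finType, alg T R) (C : R),
    0 < C /\
    forall (n : nat) (eps : R), (1 <= n)%N -> 0 < eps ->
      (forall T : finType, exists d : nat,
          d%:R <= C / eps ^+ 2 /\ queries_le (A n eps T) d) /\
      (forall (T : finType) (D : T -> R),
          is_distr D ->
          (forall x, x \in supp D -> n%:R^-1 <= D x) ->
          2 / 3 <= prob_out D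
                     (fun k => `|k - (#|supp D|)%:R| <= eps * n%:R)
                     (A n eps T)).
Proof.
exists (fun n eps T => if eps < 1 then inv_mass_mean R T (sample_size eps) else Ret 0), 8.
split=> // n eps n_gt0 eps_gt0; have eps2_gt0 : 0 < eps ^+ 2 by rewrite exprn_gt0.
split=> [T|T D D_distr mass_ge].
  case: ifP => _; last by exists 0%N; rewrite divr_ge0 // ltW.
  exists (sample_size eps).*2; split; last exact: queries_inv_mass_sum.
  rewrite -mul2n natrM (_ : 8 / eps ^+ 2 = 2 * (4 / eps ^+ 2)); last by ring.
  by rewrite ler_pM2l // sample_size_le.
case: ifP => [eps_lt1|/negbT]; last first.
  rewrite -leNgt => eps_ge1; rewrite /= sub0r normrN ger0_norm //.
  rewrite (le_trans (card_supp_le D_distr n_gt0 mass_ge)) ?ler_peMl //.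
  by rewrite ler_pdivrMr ?ltr0n // mul1r ler_nat.
have m_eps2_ge3 := sample_size_ge eps_gt0 eps_lt1.
have m_gt0 : (0 < sample_size eps)%N by rewrite -(ltr0n R); nra.
have nR_gt0 : 0 < n%:R :> R by rewrite ltr0n.
apply: le_trans (inv_mass_mean_accurate D_distr n_gt0 mass_ge m_gt0 _); last first.
  by rewrite mulr_gt0.
rewrite (_ : _ / _ = ((sample_size eps)%:R * eps ^+ 2)^-1); last by field; nra.
have : ((sample_size eps)%:R * eps ^+ 2)^-1 <= 3^-1 by rewrite lef_pV2 ?posrE //; lra.
lra.
Qed.
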